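(* Let $n\ge2$, $\alpha,\beta>0$, $a=1/\alpha$, $b=1/\beta$, and let $1\le j_1<\dots<j_r\le n-1$. For $1\le j\le n-1$ let $\alpha_j$ be the event that box $(n-j,j)$ (on the second main diagonal) contains $\alpha$. If $j_k\le j_{k+1}-2$ for all $k=1,\dots,r-1$, then \[\mathbb{P}_{n,\alpha,\beta}(\alpha_{j_1},\dots,\alpha_{j_r})=\prod_{k=1}^{r}\frac{b+j_{r-k+1}-2r+2k-1}{(n+a+b-2r+2k-1)(n+a+b-2r+2k-2)}.\] Otherwise, $\mathbb{P}_{n,\alpha,\beta}(\alpha_{j_1},\dots,\alpha_{j_r})=0$.
   Context: A staircase tableau of size $n$ has boxes $(i,j)$ with $i,j\ge1$ and $i+j\le n+1$, rows numbered from the top and columns from the left. An $\alpha/\beta$-staircase tableau of size $n$ is a filling in which each box is empty or contains $\alpha$ or $\beta$, such that: all boxes in the same column and above an $\alpha$ are empty; all boxes in the same row and to the left of a $\beta$ are empty; every main-diagonal box (with $i+j=n+1$) contains a symbol. $\overline{\mathcal{S}}_n$ is the set of these. The weight is $wt(S)=\alpha^{N_\alpha}\beta^{N_\beta}$ ($N_\alpha,N_\beta$ the numbers of $\alpha$'s, $\beta$'s), and for $\alpha,\beta>0$, $\mathbb{P}_{n,\alpha,\beta}(S)=wt(S)/Z_n(\alpha,\beta)$ with $Z_n(\alpha,\beta)=\sum_{T\in\overline{\mathcal{S}}_n}wt(T)$. The second main diagonal consists of the boxes $(n-j,j)$, $1\le j\le n-1$. $\mathbb{P}_{n,\alpha,\beta}(E_1,\dots,E_r)$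 denotes the probability of the intersection of the events. *)

From mathcomp Require Import all_boot all_order all_algebra.
Set Implicit Arguments. Unset Strict Implicit. Unset Printing Implicit Defensive.
Import Order.TTheory GRing.Theory Num.Theory.
Local Open Scope ring_scope.

(* Boxes are indexed 0-based: the paper's box (i,j) (1-based) is (i-1, j-1).
   A filling of a box: None = empty, Some true = alpha, Some false = beta. *)
Definition filling (n : nat) := {ffun 'I_n * 'I_n -> option bool}.

Definition in_stair (n : nat) (c : 'I_n * 'I_n) : bool := (c.1 + c.2 <= n.-1)%N.
Definition on_diag (n : nat) (c : 'I_n * 'I_n) : bool := (c.1 + c.2 == n.-1)%N.

Definition is_stair_tableau (n : nat) (S : filling n) : bool :=
  [forall c : 'I_n * 'I_n,
     [&& (~~ in_stair c) ==> (S c == None),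
         on_diag c ==> (S c != None),
         (S c == Some true) ==>
            [forall i : 'I_n, (i < c.1)%N ==> (S (i, c.2) == None)] &
         (S c == Some false) ==>
            [forall j : 'I_n, (j < c.2)%N ==> (S (c.1, j) == None)]]].

Definition N_alpha n (S : filling n) : nat := #|[set c | S c == Some true]|.
Definition N_beta n (S : filling n) : nat := #|[set c | S c == Some false]|.

Definition wt (R : nzRingType) (al be : R) n (S : filling n) : R :=
  al ^+ N_alpha S * be ^+ N_beta S.

Definition Zn (R : nzRingType) (al be : R) n : R :=
  \sum_(S : filling n | is_stair_tableau S) wt al be S.

Definition Prob (R : fieldType) n (al be : R) (E : filling n -> bool) : R :=
  (\sum_(S : filling n | is_stair_tableau S && E S) wt al be S) / Zn al be n.

Definition alpha_ev n (j : nat) (S : filling n) : bool :=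
  [exists c : 'I_n * 'I_n,
              [&& (c.1 == n - j - 1 :> nat)%N, (c.2 == j - 1 :> nat)%N
                & S c == Some true]].

Definition alpha_evs n (js : seq nat) (S : filling n) : bool :=
  all (fun j => alpha_ev j S) js.

Arguments Prob {R} n al be E.
Arguments alpha_evs : clear implicits.
Arguments alpha_ev : clear implicits.

From mathcomp Require Import all_boot all_order all_algebra.
From mathcomp Require Import ring lra zify.
Set Implicit Arguments. Unset Strict Implicit. Unset Printing Implicit Defensive.
Import Order.TTheory GRing.Theory Num.Theory.
Local Open Scope ring_scope.

(* Removing the top row of a staircase tableau of size m+1 leaves one of size m; the
   removed row must fill its diagonal box, may fill a box only above a column free of
   alpha, and can hold a beta only as its leftmost filled box.  Weighting tableaux also
   by y^(number of alpha-free columns), the generating function G_m(y) therefore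
   satisfies G_(m+1)(y) = (alpha + beta y) G_m(alpha + y), whence
   G_n(y) = prod_(i<n) (alpha + beta y + i alpha beta) and Z_n = G_n(1).
   An event alpha_j with j < m does not involve the top row and passes through this
   recursion.  At size j+1 it puts an alpha just left of the diagonal box of the top row;
   this forces an alpha on the diagonal box and a lone beta on the diagonal of the next
   row, so two rows go at once and the i-th event (counting from 0) contributes
   alpha^2 beta (1 + (j - 2i - 1) beta).  Dividing by Z_n gives the product formula.
   Adjacent indices force a diagonal box that can hold neither symbol, so their
   probability is 0. *)

Lemma big_option_bool (V : nmodType) (F : option bool -> V) :
  \sum_(o : option bool) F o = F None + (F (Some true) + F (Some false)).
Proof.
rewrite (bigD1 None) // (bigD1 (Some true)) // (bigD1 (Some false)) //= big1 ?addr0 //.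
by case=> [[]|].
Qed.

Lemma widen_ord_lift_max k (i : 'I_k) : widen_ord (leqnSn k) i = lift ord_max i.
Proof. exact/val_inj/esym/lift_max. Qed.

Lemma big_ord_recr_lift (R : Type) (idx : R) (op : Monoid.law idx) k (F : 'I_k.+1 -> R) :
  \big[op/idx]_(i < k.+1) F i = op (\big[op/idx]_(i < k) F (lift ord_max i)) (F ord_max).
Proof. by rewrite big_ord_recr; under eq_bigr do rewrite widen_ord_lift_max. Qed.

Definition ffun_rcons (A : finType) k (f : {ffun 'I_k -> A}) (a : A) : {ffun 'I_k.+1 -> A} :=
  [ffun j => if unlift ord_max j is Some j' then f j' else a].

Section FfunRcons.
Variables (A : finType) (k : nat) (f : {ffun 'I_k -> A}) (a : A).

Lemma ffun_rcons_max : ffun_rcons f a ord_max = a.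
Proof. by rewrite ffunE unlift_none. Qed.

Lemma ffun_rcons_lift j : ffun_rcons f a (lift ord_max j) = f j.
Proof. by rewrite ffunE liftK. Qed.

End FfunRcons.

Lemma big_ffunS (V : nmodType) (A : finType) k (F : {ffun 'I_k.+1 -> A} -> V) :
  \sum_f F f = \sum_(f : {ffun 'I_k -> A}) \sum_(a : A) F (ffun_rcons f a).
Proof.
rewrite pair_bigA (reindex (fun p : {ffun 'I_k -> A} * A => ffun_rcons p.1 p.2)) //.
exists (fun f : {ffun 'I_k.+1 -> A} => ([ffun j => f (lift ord_max j)], f ord_max)).
  case=> f a _; congr pair; last by rewrite ffun_rcons_max.
  by apply/ffunP=> j; rewrite ffunE ffun_rcons_lift.
move=> f _; apply/ffunP=> j; rewrite ffunE.
by case: unliftP => [j'|] ->; rewrite ?ffunE.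
Qed.

Notation row_filling k := {ffun 'I_k -> option bool}.

Definition cons_row m (row : row_filling m.+1) (S : filling m) : filling m.+1 :=
  [ffun c => if unlift ord0 c.1 is Some i then
               (if unlift ord_max c.2 is Some j then S (i, j) else None)
             else row c.2].

Definition top_row m (S : filling m.+1) : row_filling m.+1 := [ffun j => S (ord0, j)].

Definition behead_tableau m (S : filling m.+1) : filling m :=
  [ffun c => S (lift ord0 c.1, lift ord_max c.2)].

Section ConsRow.
Variables (m : nat) (row : row_filling m.+1) (S : filling m).

Lemma cons_row0 j : cons_row row S (ord0, j) = row j.
Proof. by rewrite ffunE /= unlift_none. Qed.

Lemma cons_row_lift i j : cons_row row S (lift ord0 i, lift ord_max j) = S (i, j).
Proof. by rewrite ffunE /= !liftK. Qed.

Lemma cons_row_lift_max i : cons_row row S (lift ord0 i, ord_max) = None.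
Proof. by rewrite ffunE /= liftK unlift_none. Qed.

Lemma top_row_cons : top_row (cons_row row S) = row.
Proof. by apply/ffunP=> j; rewrite ffunE cons_row0. Qed.

Lemma behead_tableau_cons : behead_tableau (cons_row row S) = S.
Proof. by apply/ffunP=> -[i j]; rewrite ffunE cons_row_lift. Qed.

End ConsRow.

Lemma bump_lt k j : (j < k)%N -> bump k j = j.
Proof. by move=> ltjk; rewrite /bump leqNgt ltjk. Qed.

Lemma in_stair_lift m (i j : 'I_m) :
  in_stair (lift ord0 i, lift ord_max j) = in_stair (i, j).
Proof. by rewrite /in_stair lift0 lift_max -!subn1 /=; have := ltn_ord i; lia. Qed.

Lemma on_diag_lift m (i j : 'I_m) :
  on_diag (lift ord0 i, lift ord_max j) = on_diag (i, j).
Proof. by rewrite /on_diag lift0 lift_max -!subn1 /=; have := ltn_ord i; lia. Qed.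

Lemma on_diag_lift_max m (i : 'I_m) : on_diag (lift ord0 i, ord_max) = false.
Proof. by rewrite /on_diag lift0 -!subn1 /=; lia. Qed.

Lemma in_stair_lift_max m (i : 'I_m) : in_stair (lift ord0 i, ord_max) = false.
Proof. by rewrite /in_stair lift0 -!subn1 /=; lia. Qed.

Lemma on_diag0 m (j : 'I_m.+1) : on_diag (ord0, j) = (j == ord_max).
Proof. by rewrite /on_diag /= add0n. Qed.

Lemma in_stair0 m (j : 'I_m.+1) : in_stair (ord0, j).
Proof. by rewrite /in_stair /= add0n -ltnS ltn_ord. Qed.

Lemma cons_row_eta m (S : filling m.+1) :
  is_stair_tableau S -> cons_row (top_row S) (behead_tableau S) = S.
Proof.
move=> /forallP tabS; apply/ffunP=> -[c1 c2]; rewrite ffunE /=.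
case: (unliftP ord0 c1) => [i|] ->; last by rewrite ffunE.
case: (unliftP ord_max c2) => [j|] ->; first by rewrite ffunE.
have /and4P[+ _ _ _] := tabS (lift ord0 i, ord_max).
by rewrite in_stair_lift_max => /eqP.
Qed.

Definition alpha_col n (S : filling n) (j : 'I_n) : bool :=
  [exists i, S (i, j) == Some true].

(* The last box of the top row lies above no box of [S]. *)
Definition free_col m (S : filling m) (j : 'I_m.+1) : bool :=
  if unlift ord_max j is Some j' then ~~ alpha_col S j' else true.

Lemma free_col_lift m (S : filling m) j : free_col S (lift ord_max j) = ~~ alpha_col S j.
Proof. by rewrite /free_col liftK. Qed.

Lemma free_col_max m (S : filling m) : free_col S ord_max.
Proof. by rewrite /free_col unlift_none. Qed.

Definition admissible_row k (free : 'I_k -> bool) (row : row_filling k) : bool :=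
  [forall j, (row j != None) ==> free j] &&
  [forall j, (row j == Some false) ==> [forall j' : 'I_k, (j' < j)%N ==> (row j' == None)]].

Definition top_row_ok m (S : filling m) (row : row_filling m.+1) : bool :=
  (row ord_max != None) && admissible_row (free_col S) row.

Section ConsRowTableau.
Variables (m : nat) (row : row_filling m.+1) (S : filling m).

Lemma stair_tableau_behead :
  is_stair_tableau (cons_row row S) -> is_stair_tableau S.
Proof.
move=> /forallP tab; apply/forallP=> -[i j].
have /and4P[h1 h2 h3 h4] := tab (lift ord0 i, lift ord_max j).
move: h1 h2 h3 h4; rewrite /= cons_row_lift in_stair_lift on_diag_lift => h1 h2 h3 h4.
apply/and4P; split => //.
  apply/implyP=> Sa; apply/forallP=> i0; apply/implyP=> lti.
  move: h3; rewrite Sa => /forallP /(_ (lift ord0 i0)).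
  by rewrite cons_row_lift lift0 ltnS lti.
apply/implyP=> Sb; apply/forallP=> j0; apply/implyP=> ltj.
move: h4; rewrite Sb => /forallP /(_ (lift ord_max j0)).
by rewrite cons_row_lift lift_max bump_lt // ltj.
Qed.

Lemma top_row_ok_cons :
  is_stair_tableau (cons_row row S) -> top_row_ok S row.
Proof.
move=> /forallP tab; apply/and3P; split.
- have /and4P[_ + _ _] := tab (ord0, ord_max).
  by rewrite /= cons_row0 on_diag0 eqxx.
- apply/forallP=> j; case: (unliftP ord_max j) => [j0|] ->; last first.
    by rewrite free_col_max implybT.
  rewrite free_col_lift; apply/implyP=> row_j; apply/negP=> /existsP [i Si].
  have /and4P[_ _ + _] := tab (lift ord0 i, lift ord_max j0).
  rewrite /= cons_row_lift Si => /forallP /(_ ord0).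
  by rewrite cons_row0 (negbTE row_j).
- apply/forallP=> j; have /and4P[_ _ _] := tab (ord0, j).
  rewrite /= cons_row0 => /implyP hb; apply/implyP=> /hb /forallP hj.
  by apply/forallP=> j'; have := hj j'; rewrite cons_row0.
Qed.

Lemma stair_tableau_cons_row :
  is_stair_tableau S -> top_row_ok S row -> is_stair_tableau (cons_row row S).
Proof.
move=> /forallP tabS /and3P[row_max /forallP row_free /forallP row_beta].
apply/forallP=> -[c1 c2]; case: (unliftP ord0 c1) => [i|] ->; last first.
  rewrite /= cons_row0 in_stair0 on_diag0; apply/and4P; split => //.
  - by apply/implyP=> /eqP ->.
  - by apply/implyP=> _; apply/forallP.
  - apply/implyP=> hb; apply/forallP=> j'; rewrite cons_row0.
    by have := row_beta c2; rewrite hb => /forallP /(_ j').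
case: (unliftP ord_max c2) => [j|] ->; last first.
  by rewrite /= cons_row_lift_max on_diag_lift_max eqxx implybT.
have /and4P[h1 h2 h3 h4] := tabS (i, j).
rewrite /= cons_row_lift in_stair_lift on_diag_lift; apply/and4P; split => //.
  apply/implyP=> Sa; apply/forallP=> i0; apply/implyP.
  case: (unliftP ord0 i0) => [i1|] -> lti.
    rewrite cons_row_lift; move: h3; rewrite Sa => /forallP /(_ i1).
    by move: lti; rewrite lift0 ltnS => ->.
  rewrite cons_row0; have := row_free (lift ord_max j); rewrite free_col_lift.
  have -> : alpha_col S j by apply/existsP; exists i.
  by rewrite implybF negbK.
apply/implyP=> Sb; apply/forallP=> j0; apply/implyP.
case: (unliftP ord_max j0) => [j1|] -> ltj.
  rewrite cons_row_lift; move: h4; rewrite Sb => /forallP /(_ j1).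
  by move: ltj; rewrite lift_max bump_lt // => ->.
by move: ltj; rewrite bump_lt // ltnNge (ltnW (ltn_ord j)).
Qed.

Lemma stair_tableau_consE :
  is_stair_tableau (cons_row row S) = is_stair_tableau S && top_row_ok S row.
Proof.
apply/idP/andP => [tab|[]]; last exact: stair_tableau_cons_row.
by split; [apply: stair_tableau_behead | apply: top_row_ok_cons].
Qed.

End ConsRowTableau.

Lemma big_stair_tableauS (V : nmodType) m (P : pred (filling m.+1)) (F : filling m.+1 -> V) :
  \sum_(S | is_stair_tableau S && P S) F S =
  \sum_(S | is_stair_tableau S) \sum_(row | top_row_ok S row && P (cons_row row S))
     F (cons_row row S).
Proof.
rewrite pair_big_dep (reindex_onto (fun p => cons_row p.2 p.1)
  (fun S => (behead_tableau S, top_row S))) /=; last first.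
  by move=> S /andP[tab _]; apply: cons_row_eta.
apply: eq_bigl => -[S row] /=.
by rewrite top_row_cons behead_tableau_cons eqxx andbT stair_tableau_consE andbA.
Qed.

Lemma alpha_ev_cons m j (row : row_filling m.+1) (S : filling m) : (0 < j < m)%N ->
  alpha_ev m.+1 j (cons_row row S) = alpha_ev m j S.
Proof.
move=> /andP[j_gt0 j_lt]; apply/existsP/existsP => [[[c1 c2]]|[[i j0]]].
  case: (unliftP ord0 c1) => [i|] -> /and3P[/eqP h1 /eqP h2 h3]; last by move: h1 => /=; lia.
  case: (unliftP ord_max c2) h2 h3 => [j0|] -> h2 h3; last by move: h2 => /=; lia.
  exists (i, j0); move: h1 h2 h3; rewrite cons_row_lift lift0 lift_max => h1 h2 ->.
  by rewrite andbT /=; apply/andP; split; apply/eqP; lia.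
move=> /and3P[/eqP /= h1 /eqP /= h2 Sa]; exists (lift ord0 i, lift ord_max j0).
by rewrite cons_row_lift Sa andbT lift0 lift_max /=; apply/andP; split; apply/eqP; lia.
Qed.

Lemma alpha_evs_cons m js (row : row_filling m.+1) (S : filling m) :
  all (fun j => 0 < j < m)%N js -> alpha_evs m.+1 js (cons_row row S) = alpha_evs m js S.
Proof.
elim: js => //= j js IH /andP[j_range js_range].
by rewrite alpha_ev_cons // IH.
Qed.

(* [lift ord_max ord_max] is the box just left of the diagonal box of the top row. *)
Lemma alpha_ev_cons_top k (row : row_filling k.+2) (S : filling k.+1) :
  alpha_ev k.+2 k.+1 (cons_row row S) = (row (lift ord_max ord_max) == Some true).
Proof.
apply/existsP/idP => [[[c1 c2]]|row_a].
  case: (unliftP ord0 c1) => [i|] -> /and3P[/eqP h1 /eqP h2]; first by move: h1; rewrite lift0; lia.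
  rewrite cons_row0; suff -> : c2 = lift ord_max ord_max by [].
  by apply: ord_inj; rewrite lift_max; move: h2 => /=; lia.
exists (ord0, lift ord_max ord_max); rewrite cons_row0 row_a andbT.
by rewrite lift_max; apply/andP; split; apply/eqP => /=; lia.
Qed.

Lemma alpha_evs_rcons n js j (S : filling n) :
  alpha_evs n (rcons js j) S = alpha_evs n js S && alpha_ev n j S.
Proof. by rewrite /alpha_evs all_rcons andbC. Qed.

Definition empty_row k : row_filling k := [ffun => None].

Lemma admissible_row_rcons k (free : 'I_k.+1 -> bool) row o :
  admissible_row free (ffun_rcons row o) =
  [&& admissible_row (fun j => free (lift ord_max j)) row, (o != None) ==> free ord_max &
      (o == Some false) ==> (row == empty_row k)].
Proof.
apply/idP/idP.
- case/andP=> /forallP H1 /forallP H2; apply/and3P; split.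
  + apply/andP; split; apply/forallP=> j.
      by have := H1 (lift ord_max j); rewrite ffun_rcons_lift.
    apply/implyP=> hj; apply/forallP=> j'; apply/implyP=> ltj.
    have := H2 (lift ord_max j); rewrite ffun_rcons_lift hj => /forallP /(_ (lift ord_max j')).
    by rewrite ffun_rcons_lift !lift_max ltj.
  + by have := H1 ord_max; rewrite ffun_rcons_max.
  + apply/implyP=> ob; apply/eqP/ffunP=> j; rewrite ffunE.
    have := H2 ord_max; rewrite ffun_rcons_max ob => /forallP /(_ (lift ord_max j)).
    by rewrite ffun_rcons_lift lift_max ltn_ord => /eqP.
- case/and3P=> /andP[/forallP H1 /forallP H2] Ho Hb; apply/andP; split; apply/forallP=> j.
  + case: (unliftP ord_max j) => [j0|] ->; first by rewrite ffun_rcons_lift H1.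
    by rewrite ffun_rcons_max.
  + case: (unliftP ord_max j) => [j0|] ->.
    * rewrite ffun_rcons_lift; apply/implyP=> hj; apply/forallP=> j'; apply/implyP.
      case: (unliftP ord_max j') => [j1|] ->; rewrite !lift_max => ltj; last first.
        by move: ltj; rewrite ltnNge (ltnW (ltn_ord j0)).
      by rewrite ffun_rcons_lift; have := H2 j0; rewrite hj => /forallP /(_ j1); rewrite ltj.
    * rewrite ffun_rcons_max; apply/implyP=> ob; apply/forallP=> j'; apply/implyP.
      move: Hb; rewrite ob => /eqP ->.
      case: (unliftP ord_max j') => [j1|] ->; rewrite ?ffun_rcons_lift ?ffunE //.
      by rewrite ltnn.
Qed.

Lemma admissible_empty_row k (free : 'I_k -> bool) : admissible_row free (empty_row k).
Proof. by apply/andP; split; apply/forallP=> j; rewrite ffunE. Qed.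

Lemma eq_admissible_row k (free free' : 'I_k -> bool) : free =1 free' ->
  admissible_row free =1 admissible_row free'.
Proof.
by move=> eq_free row; rewrite /admissible_row (eq_forallb (fun j => congr1 _ (eq_free j))).
Qed.

Definition gap2 (i j : nat) : bool := (i.+1 < j)%N.

Lemma pairwise_gap2_rcons s j :
  pairwise gap2 (rcons s j) = pairwise gap2 s && all (gap2^~ j) s.
Proof. by rewrite -cats1 pairwise_cat allrel1r /= andbT andbC. Qed.

Lemma gap2_size_bound s n :
  pairwise gap2 s -> all (fun j => 0 < j < n)%N s -> (2 * size s <= n)%N.
Proof.
elim/last_ind: s n => [//|s j IH] n.
rewrite pairwise_gap2_rcons all_rcons size_rcons => /andP[gap_s gap_j].
move=> /andP[/andP[j_gt0 j_lt] s_range].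
suff : (2 * size s <= j.-1)%N by lia.
apply: IH => //; apply/allP=> i i_s; have /andP[i_gt0 _] := allP s_range i i_s.
by have := allP gap_j i i_s; rewrite /gap2 i_gt0; lia.
Qed.

Section Weights.
Variables (R : comNzRingType) (al be : R).

Definition box_wt (o : option bool) : R :=
  if o is Some a then (if a then al else be) else 1.

Definition row_wt k (row : row_filling k) : R := \prod_j box_wt (row j).

Definition tableau_wt n (S : filling n) : R := \prod_c box_wt (S c).

Definition free_cols_wt n (y : R) (S : filling n) : R :=
  \prod_j (if alpha_col S j then 1 else y).

Definition pow_free k (free : 'I_k -> bool) (y : R) : R :=
  \prod_j (if free j then y else 1).

Definition row_free_cols_wt k (free : 'I_k -> bool) (y : R) (row : row_filling k) : R :=
  \prod_j (if (row j == Some true) || ~~ free j then 1 else y).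

Definition row_sum k (free : 'I_k -> bool) (y : R) : R :=
  \sum_(row | admissible_row free row) row_wt row * row_free_cols_wt free y row.

Lemma row_wt_rcons k (row : row_filling k) o : row_wt (ffun_rcons row o) = row_wt row * box_wt o.
Proof.
rewrite /row_wt big_ord_recr_lift ffun_rcons_max.
by congr (_ * _); apply: eq_bigr => j _; rewrite ffun_rcons_lift.
Qed.

Lemma row_free_cols_wt_rcons k (free : 'I_k.+1 -> bool) y (row : row_filling k) o :
  row_free_cols_wt free y (ffun_rcons row o) =
  row_free_cols_wt (fun j => free (lift ord_max j)) y row *
  (if (o == Some true) || ~~ free ord_max then 1 else y).
Proof.
rewrite /row_free_cols_wt big_ord_recr_lift ffun_rcons_max.
by congr (_ * _); apply: eq_bigr => j _; rewrite ffun_rcons_lift.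
Qed.

Lemma pow_freeS k (free : 'I_k.+1 -> bool) y :
  pow_free free y = pow_free (fun j => free (lift ord_max j)) y * (if free ord_max then y else 1).
Proof. exact: big_ord_recr_lift. Qed.

Lemma row_wt_empty k : row_wt (empty_row k) = 1.
Proof. by rewrite /row_wt big1 // => j _; rewrite ffunE. Qed.

Lemma row_free_cols_wt_empty k (free : 'I_k -> bool) y :
  row_free_cols_wt free y (empty_row k) = pow_free free y.
Proof. by apply: eq_bigr => j _; rewrite ffunE /=; case: (free j). Qed.

Lemma eq_row_free_cols_wt k (free free' : 'I_k -> bool) y : free =1 free' ->
  row_free_cols_wt free y =1 row_free_cols_wt free' y.
Proof. by move=> eq_free row; apply: eq_bigr => j _; rewrite eq_free. Qed.

Lemma eq_row_sum k (free free' : 'I_k -> bool) y :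
  free =1 free' -> row_sum free y = row_sum free' y.
Proof.
move=> eq_free; apply: eq_big => [row|row _]; first exact: eq_admissible_row.
by rewrite (eq_row_free_cols_wt y eq_free).
Qed.

(* Split on the rightmost box: alpha or empty leaves the rest of the row
   unconstrained, while beta forces it to be empty. *)
Lemma row_sum_closed k (free : 'I_k -> bool) y :
  al * row_sum free y = (al + be * y) * pow_free free (al + y) - be * y * pow_free free y.
Proof.
elim: k free => [|k IH] free.
  rewrite /row_sum (big_pred1 (empty_row 0)) => [|row]; last first.
    have -> : row = empty_row 0 by apply/ffunP=> -[].
    by rewrite admissible_empty_row /= eqxx.
  by rewrite row_wt_empty row_free_cols_wt_empty /pow_free !big_ord0 mul1r !mulr1 addrK.
set free' := fun j => free (lift ord_max j).
rewrite /row_sum big_mkcond big_ffunS.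
under eq_bigr do rewrite big_option_bool !admissible_row_rcons !row_wt_rcons
  !row_free_cols_wt_rcons.
rewrite !pow_freeS -/free' /=.
case: (free ord_max) => /=; last first.
  rewrite !mulr1 -IH /row_sum [in RHS]big_mkcond; congr (_ * _); apply: eq_bigr => row _.
  by rewrite !andbF andbT !addr0 !mulr1.
transitivity (al * \sum_row ((if admissible_row free' row then
    row_wt row * row_free_cols_wt free' y row else 0) * (y + al) +
    (if row == empty_row k then be * y * pow_free free' y else 0))).
  congr (_ * _); apply: eq_bigr => row _.
  case: (eqVneq row (empty_row k)) => [->|_].
    by rewrite admissible_empty_row row_wt_empty row_free_cols_wt_empty /=; ring.
  by rewrite !andbT !andbF; case: (admissible_row free' row) => /=; ring.
rewrite big_split /= -mulr_suml -big_mkcond -/(row_sum free' y) -big_mkcond big_pred1_eq.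
by rewrite mulrDr mulrA IH; ring.
Qed.

Lemma tableau_wt_rows n (S : filling n) : tableau_wt S = \prod_i \prod_j box_wt (S (i, j)).
Proof. by rewrite pair_bigA; apply: eq_bigr => -[i j]. Qed.

Lemma tableau_wt_cons m (row : row_filling m.+1) (S : filling m) :
  tableau_wt (cons_row row S) = tableau_wt S * row_wt row.
Proof.
rewrite !tableau_wt_rows big_ord_recl mulrC.
congr (_ * _); last by apply: eq_bigr => j _; rewrite cons_row0.
apply: eq_bigr => i _; rewrite big_ord_recr_lift /= cons_row_lift_max mulr1.
by apply: eq_bigr => j _; rewrite cons_row_lift.
Qed.

Lemma alpha_col_cons_lift m (row : row_filling m.+1) (S : filling m) j :
  alpha_col (cons_row row S) (lift ord_max j) =
  (row (lift ord_max j) == Some true) || alpha_col S j.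
Proof.
apply/existsP/orP => [[i]|[row_j|/existsP[i Sij]]].
- case: (unliftP ord0 i) => [i0|] ->; last by rewrite cons_row0; left.
  by rewrite cons_row_lift => Sa; right; apply/existsP; exists i0.
- by exists ord0; rewrite cons_row0.
- by exists (lift ord0 i); rewrite cons_row_lift.
Qed.

Lemma alpha_col_cons_max m (row : row_filling m.+1) (S : filling m) :
  alpha_col (cons_row row S) ord_max = (row ord_max == Some true).
Proof.
apply/existsP/idP => [[i]|row_max]; last by exists ord0; rewrite cons_row0.
by case: (unliftP ord0 i) => [i0|] ->; rewrite ?cons_row_lift_max ?cons_row0.
Qed.

Lemma free_cols_wt_cons m y (row : row_filling m.+1) (S : filling m) :
  free_cols_wt y (cons_row row S) = row_free_cols_wt (free_col S) y row.
Proof.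
rewrite /free_cols_wt /row_free_cols_wt !big_ord_recr_lift alpha_col_cons_max free_col_max orbF.
by congr (_ * _); apply: eq_bigr => j _; rewrite alpha_col_cons_lift free_col_lift negbK.
Qed.

Lemma pow_free_alpha_col m (S : filling m) y :
  pow_free (fun j => ~~ alpha_col S j) y = free_cols_wt y S.
Proof. by apply: eq_bigr => j _; case: (alpha_col S j). Qed.

Lemma sum_top_rows m (S : filling m) y :
  \sum_(row | top_row_ok S row) row_wt row * row_free_cols_wt (free_col S) y row =
  (al + be * y) * free_cols_wt (al + y) S.
Proof.
set free := fun j => free_col S (lift ord_max j).
have pow_freeE c : pow_free free c = free_cols_wt c S.
  by rewrite -pow_free_alpha_col; apply: eq_bigr => j _; rewrite /free free_col_lift.
rewrite big_mkcond big_ffunS.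
under eq_bigr do rewrite big_option_bool /top_row_ok !admissible_row_rcons !row_wt_rcons
  !row_free_cols_wt_rcons !ffun_rcons_max free_col_max /=.
transitivity (\sum_row ((if admissible_row free row then
    row_wt row * row_free_cols_wt free y row else 0) * al +
    (if row == empty_row m then be * y * pow_free free y else 0))).
  apply: eq_bigr => row _; case: (eqVneq row (empty_row m)) => [->|_].
    by rewrite admissible_empty_row row_wt_empty row_free_cols_wt_empty /=; ring.
  by rewrite !andbT !andbF; case: (admissible_row free row) => /=; ring.
rewrite big_split /= -mulr_suml -big_mkcond -/(row_sum free y) -big_mkcond big_pred1_eq.
by rewrite mulrC row_sum_closed !pow_freeE; ring.
Qed.

Definition gen_fun n (P : pred (filling n)) (y : R) : R :=
  \sum_(S | is_stair_tableau S && P S) tableau_wt S * free_cols_wt y S.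

Lemma gen_fun_cons m (P : pred (filling m.+1)) (P' : pred (filling m)) y :
  (forall row S, P (cons_row row S) = P' S) ->
  gen_fun P y = (al + be * y) * gen_fun P' (al + y).
Proof.
move=> PE; rewrite /gen_fun big_stair_tableauS mulr_sumr [RHS]big_mkcond [LHS]big_mkcond.
apply: eq_bigr => S _; case: (is_stair_tableau S) => //=.
under eq_bigl do rewrite PE.
case: (P' S) => /=; last by rewrite big_pred0 ?mulr0 // => row; rewrite andbF.
under eq_bigl do rewrite andbT.
under eq_bigr do rewrite tableau_wt_cons free_cols_wt_cons.
by rewrite mulrCA -sum_top_rows mulr_sumr; apply: eq_bigr => row _; ring.
Qed.

Lemma sum_rows_last_alpha k (free : 'I_k.+1 -> bool) y :
  \sum_(row | admissible_row free row && (row ord_max == Some true))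
     row_wt row * row_free_cols_wt free y row =
  al * (if free ord_max then row_sum (fun j => free (lift ord_max j)) y else 0).
Proof.
rewrite big_mkcond big_ffunS.
under eq_bigr do rewrite big_option_bool !admissible_row_rcons !row_wt_rcons
  !row_free_cols_wt_rcons !ffun_rcons_max /=.
case: (free ord_max) => /=; last by rewrite big1 ?mulr0 // => row _; rewrite !andbF !addr0.
rewrite /row_sum mulr_sumr [RHS]big_mkcond; apply: eq_bigr => row _.
by rewrite !andbT !andbF; case: (admissible_row _ row) => /=; ring.
Qed.

(* Alpha in the second to last box of the top row forces alpha in the last box:
   a beta there would have to be preceded by empty boxes. *)
Lemma sum_top_rows_alpha k (S : filling k.+1) y :
  \sum_(row | top_row_ok S row && (row (lift ord_max ord_max) == Some true))
     row_wt row * row_free_cols_wt (free_col S) y row =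
  al * al * (if alpha_col S ord_max then 0
             else row_sum (fun j => ~~ alpha_col S (lift ord_max j)) y).
Proof.
rewrite -mulrA -if_neg -(sum_rows_last_alpha (fun j => ~~ alpha_col S j)).
rewrite big_mkcond big_ffunS mulr_sumr [RHS]big_mkcond; apply: eq_bigr => row _.
rewrite big_option_bool /top_row_ok !admissible_row_rcons !row_wt_rcons
  !row_free_cols_wt_rcons !ffun_rcons_max !ffun_rcons_lift free_col_max /=.
rewrite (eq_admissible_row (free_col_lift S)) (eq_row_free_cols_wt y (free_col_lift S)) add0r.
have [row_max|_] := eqVneq (row ord_max) (Some true); last by rewrite !andbF addr0.
have -> : (row == empty_row k.+1) = false by apply/eqP=> row0; rewrite row0 ffunE in row_max.
by rewrite andbF addr0 !andbT mulr1; case: ifP => _; rewrite ?mulr0 //; ring.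
Qed.

Definition beta_row k : row_filling k.+1 := ffun_rcons (empty_row k) (Some false).

Lemma sum_top_rows_not_alpha k (S : filling k) (F : row_filling k.+1 -> R) :
  \sum_(row | top_row_ok S row && (row ord_max != Some true)) F row = F (beta_row k).
Proof.
rewrite big_mkcond big_ffunS.
under eq_bigr do rewrite big_option_bool /top_row_ok !admissible_row_rcons !ffun_rcons_max
  free_col_max /=.
rewrite (bigD1 (empty_row k)) //= admissible_empty_row eqxx /= !add0r big1 ?addr0 // => row ne.
by rewrite (negbTE ne) !andbF andbT /= !addr0.
Qed.

Lemma gen_fun_cons_alpha k (P : pred (filling k.+2)) (P' : pred (filling k.+1)) y :
  (forall row S, P (cons_row row S) = P' S && (row (lift ord_max ord_max) == Some true)) ->
  gen_fun P y = \sum_(S | is_stair_tableau S && P' S) tableau_wt S * (al * al *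
    (if alpha_col S ord_max then 0 else row_sum (fun j => ~~ alpha_col S (lift ord_max j)) y)).
Proof.
move=> PE; rewrite /gen_fun big_stair_tableauS [LHS]big_mkcond [RHS]big_mkcond.
apply: eq_bigr => S _; case: (is_stair_tableau S) => //=.
under eq_bigl do rewrite PE.
case: (P' S) => /=; last by rewrite big_pred0 // => row; rewrite andbF.
under eq_bigr do rewrite tableau_wt_cons free_cols_wt_cons.
by rewrite -sum_top_rows_alpha mulr_sumr; apply: eq_bigr => row _; ring.
Qed.

Lemma gen_fun_cons2_alpha k (P : pred (filling k.+2)) (P' : pred (filling k.+1))
    (P'' : pred (filling k)) y :
  (forall row S, P (cons_row row S) = P' S && (row (lift ord_max ord_max) == Some true)) ->
  (forall row S, P' (cons_row row S) = P'' S) ->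
  gen_fun P y = al * be * ((al + be * y) * gen_fun P'' (al + y) - be * y * gen_fun P'' y).
Proof.
move=> PE P'E; rewrite (gen_fun_cons_alpha y PE) big_stair_tableauS.
transitivity (\sum_(S | is_stair_tableau S && P'' S) tableau_wt S *
  (al * be * ((al + be * y) * free_cols_wt (al + y) S - be * y * free_cols_wt y S))); last first.
  by rewrite /gen_fun !mulr_sumr -sumrB mulr_sumr; apply: eq_bigr => S _; ring.
rewrite [LHS]big_mkcond [RHS]big_mkcond; apply: eq_bigr => S _.
case: (is_stair_tableau S) => //=.
under eq_bigl do rewrite P'E.
case: (P'' S) => /=; last by rewrite big_pred0 // => row; rewrite andbF.
under eq_bigl do rewrite andbT.
rewrite (bigID (fun row : row_filling k.+1 => row ord_max == Some true)) /=.
rewrite big1 ?add0r; last first.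
  by move=> row /andP[_ row_max]; rewrite alpha_col_cons_max row_max /= !mulr0.
(* The alpha above the diagonal box of the second row makes that box a beta,
   which empties the rest of its row. *)
rewrite sum_top_rows_not_alpha /beta_row alpha_col_cons_max ffun_rcons_max /=.
rewrite (eq_row_sum y (_ : _ =1 fun j => ~~ alpha_col S j)) => [|j]; last first.
  by rewrite alpha_col_cons_lift ffun_rcons_lift ffunE.
rewrite tableau_wt_cons row_wt_rcons row_wt_empty mul1r /= -!pow_free_alpha_col.
by rewrite -row_sum_closed; ring.
Qed.

Definition stair_gen t (x : R) : R := \prod_(i < t) (al + be * x + i%:R * (al * be)).

Definition alpha_weight (js : seq nat) : R :=
  \prod_(i < size js) (al * al * be * (1 + ((nth 0%N js i)%:R - 2 * i%:R - 1) * be)).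

Lemma stair_genS t x : (al + be * x) * stair_gen t (al + x) = stair_gen t.+1 x.
Proof.
rewrite /stair_gen big_ord_recl /= mul0r addr0; congr (_ * _); apply: eq_bigr => i _.
by rewrite /bump /= natrD; ring.
Qed.

Lemma stair_gen_diff t x :
  (al + be * x) * stair_gen t (al + x) - be * x * stair_gen t x =
  stair_gen t x * (al + t%:R * (al * be)).
Proof. by rewrite stair_genS /stair_gen big_ord_recr /=; ring. Qed.

Lemma stair_gen_addn2 t x :
  stair_gen t.+2 x = stair_gen t x *
    ((al + be * x + t%:R * (al * be)) * (al + be * x + t.+1%:R * (al * be))).
Proof. by rewrite /stair_gen !big_ord_recr /= -mulrA. Qed.

Lemma stair_gen_split n r x : (2 * r <= n)%N ->
  stair_gen n x = stair_gen (n - 2 * r) x *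
    \prod_(k < r) ((al + be * x + (n - 2 * k - 2)%:R * (al * be)) *
                   (al + be * x + (n - 2 * k - 1)%:R * (al * be))).
Proof.
elim: r => [|r IH] r_le; first by rewrite muln0 subn0 big_ord0 mulr1.
rewrite IH 1?big_ord_recr /=; last by lia.
have -> : (n - 2 * r = (n - 2 * r.+1).+2)%N by lia.
by rewrite !subSS !subn0 stair_gen_addn2; ring.
Qed.

Lemma alpha_weight_rcons js j :
  alpha_weight (rcons js j) =
  alpha_weight js * (al * al * be * (1 + (j%:R - 2 * (size js)%:R - 1) * be)).
Proof.
rewrite /alpha_weight size_rcons big_ord_recr /= nth_rcons ltnn eqxx; congr (_ * _).
by apply: eq_bigr => i _; rewrite nth_rcons ltn_ord.
Qed.

Lemma gen_fun0 y : gen_fun (alpha_evs 0 [::]) y = 1.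
Proof.
rewrite /gen_fun (big_pred1 [ffun => None]) => [|S].
  by rewrite /tableau_wt /free_cols_wt !big1 ?mulr1 // => -[[]].
have -> : S = [ffun => None] by apply/ffunP=> -[[]].
by rewrite /= eqxx andbT; apply/forallP=> -[[]].
Qed.

Lemma gen_fun_alpha_evs_cons m js y : all (fun j => 0 < j < m)%N js ->
  gen_fun (alpha_evs m.+1 js) y = (al + be * y) * gen_fun (alpha_evs m js) (al + y).
Proof. by move=> js_range; apply: gen_fun_cons => row S; rewrite alpha_evs_cons. Qed.

Lemma gen_fun_alpha_evs_top k js y : all (fun j => 0 < j < k)%N js ->
  gen_fun (alpha_evs k.+2 (rcons js k.+1)) y =
  al * be * ((al + be * y) * gen_fun (alpha_evs k js) (al + y) -
             be * y * gen_fun (alpha_evs k js) y).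
Proof.
move=> js_range; have js_range' : all (fun j => 0 < j < k.+1)%N js.
  by apply: sub_all js_range => j /andP[-> /ltnW].
apply: (gen_fun_cons2_alpha (P' := alpha_evs k.+1 js)) => row S.
  by rewrite alpha_evs_rcons alpha_evs_cons // alpha_ev_cons_top.
by rewrite alpha_evs_cons.
Qed.

Lemma gen_fun_alpha_evs n js y : pairwise gap2 js -> all (fun j => 0 < j < n)%N js ->
  gen_fun (alpha_evs n js) y = alpha_weight js * stair_gen (n - 2 * size js) y.
Proof.
elim/ltn_ind: n js y => -[|m] IH js y.
  case: js => [_ _|j js _ /andP[/andP[j_gt0 j_lt0] _]]; last by lia.
  by rewrite gen_fun0 /alpha_weight /stair_gen !big_ord0 mulr1.
case/lastP: js => [_ _|js j gap_rcons].
  rewrite gen_fun_alpha_evs_cons // IH // /alpha_weight !big_ord0 !mul1r.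
  by rewrite !muln0 !subn0 stair_genS.
move: (gap_rcons); rewrite pairwise_gap2_rcons all_rcons => /andP[gap_js gap_j].
move=> /andP[/andP[j_gt0 j_le] js_range].
have js_below_j : all (fun i => 0 < i < j.-1)%N js.
  apply/allP=> i i_js; have := allP gap_j i i_js; have := allP js_range i i_js.
  by rewrite /gap2; lia.
case: (ltnP j m) => [j_lt|j_ge].
  have rcons_range : all (fun i => 0 < i < m)%N (rcons js j).
    by rewrite all_rcons j_gt0 j_lt; apply: sub_all js_below_j => i; lia.
  have := gap2_size_bound gap_rcons rcons_range.
  rewrite gen_fun_alpha_evs_cons // IH // mulrCA stair_genS => size_le.
  by congr (_ * stair_gen _ _); lia.
have ej : j = m by lia.
subst j; clear j_le j_ge js_range gap_rcons gap_j.
case: m IH j_gt0 js_below_j => [//|k] IH _ js_range'.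
have size_le := gap2_size_bound gap_js js_range'.
rewrite gen_fun_alpha_evs_top // !IH //; set t := (k - 2 * size js)%N.
transitivity (al * be * alpha_weight js *
  ((al + be * y) * stair_gen t (al + y) - be * y * stair_gen t y)); first by ring.
rewrite stair_gen_diff alpha_weight_rcons size_rcons.
have -> : (k.+2 - 2 * (size js).+1 = t)%N by rewrite /t; lia.
by rewrite /t natrB // natrM; ring.
Qed.

Lemma wt_tableau_wt n (S : filling n) :
  wt al be S = tableau_wt S.
Proof.
rewrite /wt /N_alpha /N_beta /tableau_wt.
transitivity (\prod_c ((if S c == Some true then al else 1) *
                       (if S c == Some false then be else 1))).
  by rewrite big_split /= -!big_mkcond /= !prodr_const !cardsE.
by apply: eq_bigr => c _; case: (S c) => [[]|] /=; rewrite ?mulr1 ?mul1r.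
Qed.

Lemma sum_wt_gen_fun n (P : pred (filling n)) :
  \sum_(S | is_stair_tableau S && P S) wt al be S = gen_fun P 1.
Proof.
apply: eq_bigr => S _; rewrite wt_tableau_wt /free_cols_wt big1 ?mulr1 //.
by move=> j _; case: (alpha_col S j).
Qed.

End Weights.

Lemma stair_gen_gt0 (R : realFieldType) (al be : R) t x :
  0 < al -> 0 < be -> 0 <= x -> 0 < stair_gen al be t x.
Proof.
move=> al_gt0 be_gt0 x_ge0; apply: prodr_gt0 => i _.
have : 0 <= i%:R * (al * be) by rewrite mulr_ge0 ?ler0n // ltW ?mulr_gt0.
have : 0 <= be * x by rewrite mulr_ge0 // ltW.
lra.
Qed.

Lemma alpha_factor_ratio (R : fieldType) (al be N J K : R) : al != 0 -> be != 0 ->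
  al * al * be * (1 + (J - 2 * K - 1) * be) /
    ((al + be + (N - 2 * K - 2) * (al * be)) * (al + be + (N - 2 * K - 1) * (al * be))) =
  (be^-1 + J - 2 * K - 1) /
    ((N + al^-1 + be^-1 - 2 * K - 1) * (N + al^-1 + be^-1 - 2 * K - 2)).
Proof.
move=> al_neq0 be_neq0; pose D d := N + al^-1 + be^-1 - 2 * K - d.
have scale d : al + be + (N - 2 * K - d) * (al * be) = al * be * D d.
  by rewrite /D; field; rewrite al_neq0 be_neq0.
have -> : 1 + (J - 2 * K - 1) * be = be * (be^-1 + J - 2 * K - 1) by field.
have -> : al * al * be * (be * (be^-1 + J - 2 * K - 1)) =
          (al * be) ^+ 2 * (be^-1 + J - 2 * K - 1) by ring.
rewrite !scale (_ : _ * _ * (_ * _ * _) = (al * be) ^+ 2 * (D 1 * D 2)); last by ring.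
by rewrite -mulf_div divff ?mul1r // expf_neq0 // mulf_neq0.
Qed.

(* The diagonal box between the boxes of [alpha_j] and [alpha_(j+1)] can hold
   neither alpha (the box above it is filled) nor beta (the box to its left is). *)
Lemma alpha_ev_adjacent n j (S : filling n) : is_stair_tableau S -> (0 < j)%N ->
  (j.+1 < n)%N -> alpha_ev n j S -> alpha_ev n j.+1 S -> False.
Proof.
move=> /forallP tab j_gt0 j_lt /existsP[[i1 j1] /and3P[/eqP /= ei1 /eqP /= ej1 /eqP S1]].
move=> /existsP[[i2 j2] /and3P[/eqP /= ei2 /eqP /= ej2 /eqP S2]].
have diag : (i1 + j2 == n.-1)%N by rewrite -subn1; apply/eqP; lia.
have /and4P[_ + hα hβ] := tab (i1, j2).
rewrite /on_diag /= diag.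
case: (S (i1, j2)) hα hβ => [[]|//] /= hα hβ _.
  have i2_lt : (i2 < i1)%N by lia.
  by move/forallP: hα => /(_ i2); rewrite i2_lt S2.
have j1_lt : (j1 < j2)%N by lia.
by move/forallP: hβ => /(_ j1); rewrite j1_lt S1.
Qed.

Lemma Prob_alpha_evs_adjacent (R : fieldType) n (al be : R) js j :
  (0 < j)%N -> (j.+1 < n)%N -> j \in js -> j.+1 \in js ->
  Prob n al be (alpha_evs n js) = 0.
Proof.
move=> j_gt0 j_lt j_js j1_js; rewrite /Prob big_pred0 ?mul0r // => S.
apply/negbTE/andP => -[tab /allP evs].
exact: alpha_ev_adjacent tab j_gt0 j_lt (evs _ j_js) (evs _ j1_js).
Qed.

Lemma Prob_alpha_evs_gap2 (R : realFieldType) n (al be : R) js :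
  0 < al -> 0 < be -> pairwise gap2 js -> all (fun j => 0 < j < n)%N js ->
  Prob n al be (alpha_evs n js) =
  \prod_(i < size js) ((be^-1 + (nth 0%N js i)%:R - 2 * i%:R - 1) /
     ((n%:R + al^-1 + be^-1 - 2 * i%:R - 1) * (n%:R + al^-1 + be^-1 - 2 * i%:R - 2))).
Proof.
move=> al_gt0 be_gt0 gap_js js_range.
have size_le := gap2_size_bound gap_js js_range.
have Zn_gen : Zn al be n = gen_fun al be (alpha_evs n [::]) 1.
  by rewrite -sum_wt_gen_fun; apply: eq_bigl => S; rewrite andbT.
rewrite /Prob sum_wt_gen_fun Zn_gen !gen_fun_alpha_evs // muln0 subn0.
rewrite /alpha_weight big_ord0 mul1r (stair_gen_split al be 1 size_le) invfM mulrA.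
rewrite mulfK ?gt_eqF ?stair_gen_gt0 // -prodf_div; apply: eq_bigr => i _.
have i_lt := ltn_ord i.
have [le_2i le_2i2] : (2 * i <= n /\ 2 <= n - 2 * i)%N by lia.
rewrite mulr1 !natrB ?(leq_trans _ le_2i2) // natrM.
by rewrite alpha_factor_ratio ?gt_eqF.
Qed.

Lemma pairwise_gap2_nth js :
  (forall k, k.+1 < size js -> nth 0 js k + 2 <= nth 0 js k.+1)%N -> pairwise gap2 js.
Proof.
move=> gaps; rewrite -sorted_pairwise => [|i j l]; last by rewrite /gap2; lia.
by apply/(sortedP 0%N) => k k_lt; have := gaps k k_lt; rewrite /gap2; lia.
Qed.

Lemma sorted_nth_succ js k : sorted ltn js -> (k.+1 < size js)%N ->
  ~~ (nth 0 js k + 2 <= nth 0 js k.+1)%N -> (nth 0 js k.+1 = (nth 0 js k).+1)%N.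
Proof. by move=> /(sortedP 0%N) /(_ k) lt_k /lt_k /= lt_nth; lia. Qed.

Theorem theorem3p3 (R : realFieldType) (n : nat) (al be : R) (js : seq nat) :
  (2 <= n)%N -> 0 < al -> 0 < be ->
  (0 < size js)%N -> sorted ltn js ->
  all (fun j => (1 <= j <= n - 1)%N) js ->
  let r := size js in
  let a := al^-1 in
  let b := be^-1 in
  if [forall k : 'I_r, (k.+1 < r)%N ==> (nth 0 js k + 2 <= nth 0 js k.+1)%N]
  then Prob n al be (alpha_evs n js) =
       \prod_(k < r)
         ((b + (nth 0 js (r - k.+1))%:R - 2 * r%:R + 2 * (k.+1)%:R - 1) /
          ((n%:R + a + b - 2 * r%:R + 2 * (k.+1)%:R - 1) *
           (n%:R + a + b - 2 * r%:R + 2 * (k.+1)%:R - 2)))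
  else Prob n al be (alpha_evs n js) = 0.
Proof.
move=> _ al_gt0 be_gt0 _ js_sorted js_range r a b.
have js_range' : all (fun j => 0 < j < n)%N js by apply: sub_all js_range => j; lia.
case: ifP => [/forallP gaps | /negbT/forallPn[k]].
  have gap_js : pairwise gap2 js.
    by apply: pairwise_gap2_nth => k k_lt; have /implyP := gaps (Ordinal (ltnW k_lt)); apply.
  rewrite Prob_alpha_evs_gap2 // (reindex_inj rev_ord_inj); apply: eq_bigr => k _ /=.
  by rewrite natrB ?ltn_ord //; congr (_ / (_ * _)); rewrite /a /b; ring.
rewrite negb_imply => /andP[k_lt no_gap].
have succ := sorted_nth_succ js_sorted k_lt no_gap.
have j_js : nth 0 js k \in js by rewrite mem_nth // ltnW.
have j1_js : (nth 0 js k).+1 \in js by rewrite -succ mem_nth.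
have /andP[j_gt0 _] := allP js_range' _ j_js.
have /andP[_ j1_lt] := allP js_range' _ j1_js.
exact: Prob_alpha_evs_adjacent j_gt0 j1_lt j_js j1_js.
Qed.
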